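(* Let $\mathcal H$ be a separable complex Hilbert space, $A\in L(\mathcal H)^+$ and $\mathcal S$ a closed subspace such that $(A,\mathcal S)$ is compatible, and let $\mathcal N=\mathcal S\cap N(A)$. Then $$\Pi(A,\mathcal S)=P_{A,\mathcal S}+L(\mathcal H,\mathcal N)=\{P_{A,\mathcal S}+W:\ W\in L(\mathcal H),\ R(W)\subseteq\mathcal N\}.$$
   Context: $(A,\mathcal S)$ is compatible if there exists $Q\in L(\mathcal H)$ with $Q^2=Q$, $R(Q)=\mathcal S$, $AQ=Q^*A$. In that case $P_{A,\mathcal S}$ denotes the unique (bounded) oblique projection with range $\mathcal S$ and nullspace $A(\mathcal S)^\perp\cap\mathcal N^\perp$; it satisfies $AP_{A,\mathcal S}=P_{A,\mathcal S}^*A$. $\Pi(A,\mathcal S)$ is the set of $A$-projections into $\mathcal S$: operators $T\in L(\mathcal H)$ with $R(T)\subseteq\mathcal S$ and $\|y-Ty\|_A\le\|y-s\|_A$ for all $y\in\mathcal H$, $s\in\mathcal S$, where $\|z\|_A=\langle Az,z\rangle^{1/2}$. *)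

From mathcomp Require Import all_boot all_algebra.
From mathcomp Require Import boolp classical_sets reals.
From mathcomp.real_closed Require Import complex.
Set Implicit Arguments. Unset Strict Implicit. Unset Printing Implicit Defensive.
Import GRing.Theory Num.Theory.
Local Open Scope ring_scope.
Local Open Scope classical_set_scope.

Section Hilbert.
Variables (R : realType) (H : lmodType R[i]) (ip : H -> H -> R[i]).

Definition inner_product : Prop :=
  [/\ (forall (a : R[i]) (x y z : H), ip (a *: x + y) z = a * ip x z + ip y z),
      (forall x y : H, ip y x = (ip x y)^*),
      (forall x : H, 0 <= ip x x) &
      (forall x : H, ip x x = 0 -> x = 0)].

Definition hnorm (x : H) : R := Num.sqrt (complex.Re (ip x x)).

Definition hconverges (u : nat -> H) (l : H) : Prop :=
  forall e : R, 0 < e -> exists N : nat, forall n : nat, (N <= n)%N -> hnorm (u n - l) < e.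

Definition hcauchy (u : nat -> H) : Prop :=
  forall e : R, 0 < e -> exists N : nat,
    forall m n : nat, (N <= m)%N -> (N <= n)%N -> hnorm (u m - u n) < e.

Definition hcomplete : Prop :=
  forall u : nat -> H, hcauchy u -> exists l : H, hconverges u l.

Definition hseparable : Prop :=
  exists d : nat -> H, forall (x : H) (e : R), 0 < e -> exists n : nat, hnorm (x - d n) < e.

Definition separable_complex_Hilbert_space : Prop :=
  [/\ inner_product, hcomplete & hseparable].

Definition bounded_op (T : H -> H) : Prop :=
  (forall (a : R[i]) (x y : H), T (a *: x + y) = a *: T x + T y) /\
  exists M : R, forall x : H, hnorm (T x) <= M * hnorm x.

Definition is_adjoint (T Ts : H -> H) : Prop :=
  forall x y : H, ip (T x) y = ip x (Ts y).

Definition positive_op (A : H -> H) : Prop :=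
  bounded_op A /\ forall x : H, 0 <= ip (A x) x.

Definition closed_subspace (S : set H) : Prop :=
  [/\ S 0,
      (forall (a : R[i]) (x y : H), S x -> S y -> S (a *: x + y)) &
      (forall (u : nat -> H) (l : H), (forall n, S (u n)) -> hconverges u l -> S l)].

Definition kernel (T : H -> H) : set H := [set x | T x = 0].

Definition orth (M : set H) : set H := [set y | forall m, M m -> ip y m = 0].

Definition compatible (A : H -> H) (S : set H) : Prop :=
  exists Q : H -> H, [/\ bounded_op Q, (forall x, Q (Q x) = Q x), range Q = S &
    exists Qs : H -> H, [/\ bounded_op Qs, is_adjoint Q Qs & forall x, A (Q x) = Qs (A x)]].

Definition is_P_AS (A : H -> H) (S : set H) (P : H -> H) : Prop :=
  [/\ bounded_op P, (forall x, P (P x) = P x), range P = S &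
      kernel P = orth (A @` S) `&` orth (S `&` kernel A)].

Definition Anorm (A : H -> H) (z : H) : R := Num.sqrt (complex.Re (ip (A z) z)).

Definition A_projections (A : H -> H) (S : set H) : set (H -> H) :=
  [set T | [/\ bounded_op T, (forall y, S (T y)) &
     forall y s : H, S s -> Anorm A (y - T y) <= Anorm A (y - s)]].

End Hilbert.

From mathcomp Require Import all_boot all_algebra.
From mathcomp Require Import boolp classical_sets reals.
From mathcomp.real_closed Require Import complex.
From mathcomp Require Import all_order ring lra.
Set Implicit Arguments.
Unset Strict Implicit.
Unset Printing Implicit Defensive.
Import Order.TTheory GRing.Theory Num.Theory.
Local Open Scope complex_scope.
Local Open Scope ring_scope.
Local Open Scope classical_set_scope.

(* For every y the residual y - P y is A-orthogonal to S: N(P) lies in A(S)^perp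
   and A is self-adjoint.  Hence ||y - s||_A^2 = ||y - P y||_A^2 + ||P y - s||_A^2
   for s in S, so T is an A-projection exactly when ||T y - P y||_A = 0 for all y,
   i.e. when A (T y - P y) = 0 by Cauchy-Schwarz for the positive form <A., .>. *)

Lemma sqr_le_mul_of_quadratic_ge0 (R : realFieldType) (a b c : R) : 0 <= b ->
  (forall t, 0 <= a + 2 * t * c + t ^+ 2 * b) -> c ^+ 2 <= a * b.
Proof.
move=> b_ge0 quad_ge0; have [b0|b_neq0] := eqVneq b 0.
  subst b; have [c0|c_neq0] := eqVneq c 0; first by subst c; lra.
  have := quad_ge0 (- (a + 1) / (2 * c)).
  have -> : 2 * (- (a + 1) / (2 * c)) * c = - (a + 1) by field; rewrite c_neq0.
  lra.
have b_gt0 : 0 < b by rewrite lt0r b_neq0 b_ge0.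
have value_at_min : b * (a + 2 * (- c / b) * c + (- c / b) ^+ 2 * b) = a * b - c ^+ 2.
  by field.
have := mulr_ge0 b_ge0 (quad_ge0 (- c / b)); rewrite value_at_min; lra.
Qed.

Lemma complex_ge0P (R : rcfType) (z : R[i]) :
  0 <= z -> complex.Im z = 0 /\ 0 <= complex.Re z.
Proof. by case: z => a b; rewrite lecE /= => /andP[/eqP -> ->]. Qed.

Section LinearMap.
Variables (K : pzRingType) (U V : lmodType K) (T : U -> V).
Hypothesis T_lin : forall (a : K) (x y : U), T (a *: x + y) = a *: T x + T y.

Lemma linD x y : T (x + y) = T x + T y.
Proof. by have := T_lin 1 x y; rewrite !scale1r. Qed.

Lemma lin0 : T 0 = 0.
Proof. by apply: (addrI (T 0)); rewrite -linD !addr0. Qed.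

Lemma linZ a x : T (a *: x) = a *: T x.
Proof. by have := T_lin a x 0; rewrite !addr0 lin0 addr0. Qed.

Lemma linN x : T (- x) = - T x.
Proof. by rewrite -scaleN1r linZ scaleN1r. Qed.

Lemma linB x y : T (x - y) = T x - T y.
Proof. by rewrite linD linN. Qed.

End LinearMap.

Section HermitianForm.
Variables (R : realType) (H : lmodType R[i]) (f : H -> H -> R[i]).
Hypothesis f_linl : forall (a : R[i]) (x y z : H), f (a *: x + y) z = a * f x z + f y z.
Hypothesis f_herm : forall x y : H, f y x = (f x y)^*.

Lemma formDl x y z : f (x + y) z = f x z + f y z.
Proof. by have := f_linl 1 x y z; rewrite scale1r mul1r. Qed.

Lemma form0l z : f 0 z = 0.
Proof. by apply: (addrI (f 0 z)); rewrite -formDl !addr0. Qed.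

Lemma formZl a x z : f (a *: x) z = a * f x z.
Proof. by have := f_linl a x 0 z; rewrite !addr0 form0l addr0. Qed.

Lemma formNl x z : f (- x) z = - f x z.
Proof. by rewrite -scaleN1r formZl mulN1r. Qed.

Lemma formDr z x y : f z (x + y) = f z x + f z y.
Proof. by rewrite f_herm formDl rmorphD [f z x]f_herm [f z y]f_herm. Qed.

Lemma formZr z a x : f z (a *: x) = a^* * f z x.
Proof. by rewrite f_herm formZl rmorphM [f z x]f_herm. Qed.

Lemma formNr z x : f z (- x) = - f z x.
Proof. by rewrite f_herm formNl rmorphN [f z x]f_herm. Qed.

Lemma Re_form_addZr (r : R) x y :
  complex.Re (f (x + r%:C *: y) (x + r%:C *: y)) =
  complex.Re (f x x) + 2 * r * complex.Re (f x y) + r ^+ 2 * complex.Re (f y y).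
Proof.
rewrite !formDl !formDr !formZl !formZr [f y x]f_herm.
by case: (f x x) (f x y) (f y y) => [a b] [c d] [e g] /=; ring.
Qed.

Lemma Re_formD x y : complex.Re (f (x + y) (x + y)) =
  complex.Re (f x x) + 2 * complex.Re (f x y) + complex.Re (f y y).
Proof. by have := Re_form_addZr 1 x y; rewrite scale1r mulr1 expr1n mul1r. Qed.

Hypothesis f_ge0 : forall x, 0 <= f x x.

Lemma Re_form_ge0 x : 0 <= complex.Re (f x x).
Proof. by case: (complex_ge0P (f_ge0 x)). Qed.

Lemma Re_form_CauchySchwarz x y :
  complex.Re (f x y) ^+ 2 <= complex.Re (f x x) * complex.Re (f y y).
Proof.
apply: sqr_le_mul_of_quadratic_ge0 (Re_form_ge0 y) _ => t.
by rewrite -Re_form_addZr Re_form_ge0.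
Qed.

End HermitianForm.

Lemma sesquilinear_real_diag_herm (R : realType) (H : lmodType R[i])
    (g : H -> H -> R[i])
    (gDl : forall x y z, g (x + y) z = g x z + g y z)
    (gZl : forall a x z, g (a *: x) z = a * g x z)
    (gDr : forall z x y, g z (x + y) = g z x + g z y)
    (gZr : forall z a x, g z (a *: x) = a^* * g z x)
    (g_real : forall x, complex.Im (g x x) = 0) x y :
  g y x = (g x y)^*.
Proof.
(* polarization: the imaginary parts of g(x+y,x+y) and g(x+iy,x+iy) vanish *)
have := g_real (x + y); have := g_real (x + 'i%C *: y).
rewrite !gDl !gDr !gZl !gZr; have := g_real x; have := g_real y.
case: (g x x) (g x y) (g y x) (g y y) => [a b] [c d] [e k] [p q] /= hy hx hxiy hxy.
by apply/eqP; rewrite eq_complex /=; apply/andP; split; apply/eqP; lra.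
Qed.

Section InnerProductSpace.
Variables (R : realType) (H : lmodType R[i]) (ip : H -> H -> R[i]).
Hypothesis ip_inner : inner_product ip.

Let ip_linl : forall (a : R[i]) (x y z : H), ip (a *: x + y) z = a * ip x z + ip y z.
Proof. by case: ip_inner. Qed.
Let ip_herm : forall x y : H, ip y x = (ip x y)^*.
Proof. by case: ip_inner. Qed.
Let ip_ge0 : forall x : H, 0 <= ip x x.
Proof. by case: ip_inner. Qed.

Lemma hnormN x : hnorm ip (- x) = hnorm ip x.
Proof. by rewrite /hnorm (formNl ip_linl) (formNr ip_linl ip_herm) opprK. Qed.

Lemma hnormD x y : hnorm ip (x + y) <= hnorm ip x + hnorm ip y.
Proof.
rewrite /hnorm (Re_formD ip_linl ip_herm).
have := Re_form_CauchySchwarz ip_linl ip_herm ip_ge0 x y.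
have := Re_form_ge0 ip_ge0 x; have := Re_form_ge0 ip_ge0 y.
move: (complex.Re (ip x x)) (complex.Re (ip y y)) (complex.Re (ip x y)) => a b c b_ge0 a_ge0 cs.
have c_le : c <= Num.sqrt a * Num.sqrt b.
  by rewrite -sqrtrM // (le_trans (ler_norm c)) // -sqrtr_sqr ler_wsqrtr.
rewrite -[X in _ <= X]ger0_norm ?addr_ge0 ?sqrtr_ge0 // -sqrtr_sqr ler_wsqrtr //.
have := sqr_sqrtr a_ge0; have := sqr_sqrtr b_ge0; nra.
Qed.

Lemma bounded_opD (T W : H -> H) : bounded_op ip T -> bounded_op ip W ->
  bounded_op ip (fun x => T x + W x).
Proof.
move=> [T_lin [M T_bd]] [W_lin [N W_bd]]; split.
  by move=> a x y; rewrite T_lin W_lin scalerDr addrACA.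
by exists (M + N) => x; rewrite mulrDl (le_trans (hnormD _ _)) ?lerD.
Qed.

Lemma bounded_opN (T : H -> H) : bounded_op ip T -> bounded_op ip (fun x => - T x).
Proof.
move=> [T_lin [M T_bd]]; split; first by move=> a x y; rewrite T_lin opprD scalerN.
by exists M => x; rewrite hnormN.
Qed.

End InnerProductSpace.

Section PositiveOperator.
Variables (R : realType) (H : lmodType R[i]) (ip : H -> H -> R[i]) (A : H -> H).

Definition Aform (x y : H) : R[i] := ip (A x) y.

Hypothesis ip_inner : inner_product ip.
Hypothesis A_pos : positive_op ip A.

Let ip_linl : forall (a : R[i]) (x y z : H), ip (a *: x + y) z = a * ip x z + ip y z.
Proof. by case: ip_inner. Qed.
Let ip_herm : forall x y : H, ip y x = (ip x y)^*.
Proof. by case: ip_inner. Qed.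
Let A_lin : forall (a : R[i]) (x y : H), A (a *: x + y) = a *: A x + A y.
Proof. by case: A_pos => -[]. Qed.

Lemma Aform_ge0 x : 0 <= Aform x x.
Proof. by case: A_pos => _; apply. Qed.

Lemma Re_Aform_ge0 x : 0 <= complex.Re (Aform x x).
Proof. exact: Re_form_ge0 Aform_ge0 x. Qed.

Lemma Aform_linl (a : R[i]) x y z : Aform (a *: x + y) z = a * Aform x z + Aform y z.
Proof. by rewrite /Aform A_lin ip_linl. Qed.

Lemma Aform_herm x y : Aform y x = (Aform x y)^*.
Proof.
apply: sesquilinear_real_diag_herm.
- exact: formDl Aform_linl.
- exact: formZl Aform_linl.
- by move=> z x' y'; rewrite /Aform (formDr ip_linl ip_herm).
- by move=> z a x'; rewrite /Aform (formZr ip_linl ip_herm).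
- by move=> z; case: (complex_ge0P (Aform_ge0 z)).
Qed.

Lemma positive_op_selfadj x y : ip (A x) y = ip x (A y).
Proof. by rewrite -/(Aform x y) Aform_herm [RHS]ip_herm. Qed.

Lemma Aform_eq0_kernel v : complex.Re (Aform v v) = 0 -> A v = 0.
Proof.
move=> Av0; case: ip_inner => _ _ ip_ge0 ip_def; apply: ip_def.
have := Re_form_CauchySchwarz Aform_linl Aform_herm Aform_ge0 v (A v).
rewrite Av0 mul0r /Aform => sqr_le0.
have [Im0 _] := complex_ge0P (ip_ge0 (A v)).
have Re0 : complex.Re (ip (A v) (A v)) = 0.
  by have := sqr_ge0 (complex.Re (ip (A v) (A v))); nra.
by rewrite [LHS]complexE Re0 Im0 mulr0 addr0.
Qed.

End PositiveOperator.

Section ASubspaceProjection.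
Variables (R : realType) (H : lmodType R[i]) (ip : H -> H -> R[i]) (A : H -> H).
Variables (S : set H) (P : H -> H).
Hypothesis ip_inner : inner_product ip.
Hypothesis A_pos : positive_op ip A.
Hypothesis S_lin : forall (a : R[i]) (x y : H), S x -> S y -> S (a *: x + y).
Hypothesis P_AS : is_P_AS ip A S P.

Lemma subspaceD x y : S x -> S y -> S (x + y).
Proof. by move=> Sx Sy; have := S_lin 1 Sx Sy; rewrite scale1r. Qed.

Lemma subspaceB x y : S x -> S y -> S (x - y).
Proof. by move=> Sx Sy; have := S_lin (-1) Sy Sx; rewrite scaleN1r addrC. Qed.

Lemma P_AS_range y : S (P y).
Proof. by case: P_AS => _ _ <- _; exists y. Qed.

Lemma P_AS_residual_Aorth y s : S s -> Aform ip A (y - P y) s = 0.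
Proof.
case: P_AS => [[P_lin _] P_idem _ P_ker] Ss.
have : kernel P (y - P y) by rewrite /kernel /= (linB P_lin) P_idem subrr.
rewrite P_ker => -[orth_AS _].
by rewrite /Aform (positive_op_selfadj ip_inner A_pos); apply: orth_AS; exists s.
Qed.

Lemma Re_Aform_Pythagoras y s : S s ->
  complex.Re (Aform ip A (y - s) (y - s)) =
  complex.Re (Aform ip A (y - P y) (y - P y)) + complex.Re (Aform ip A (P y - s) (P y - s)).
Proof.
move=> Ss; have -> : y - s = (y - P y) + (P y - s) by rewrite addrA subrK.
have orth := P_AS_residual_Aorth y (subspaceB (P_AS_range y) Ss).
have Aform_linl := Aform_linl ip_inner A_pos; have Aform_herm := Aform_herm ip_inner A_pos.
by rewrite (Re_formD Aform_linl Aform_herm (y - P y)) orth /= mulr0 addr0.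
Qed.

Lemma A_projection_iff (T : H -> H) : (forall y, S (T y)) ->
  (forall y s, S s -> Anorm ip A (y - T y) <= Anorm ip A (y - s)) <->
  (forall y, A (T y - P y) = 0).
Proof.
have [[A_lin _] _] := A_pos; have Re_Aform_ge0 := Re_Aform_ge0 A_pos.
move=> TS; split=> [T_min y | A_TP0 y s Ss].
- suff A_PT0 : A (P y - T y) = 0 by rewrite -opprB (linN A_lin) A_PT0 oppr0.
  apply: (Aform_eq0_kernel ip_inner A_pos); apply/eqP; rewrite eq_le Re_Aform_ge0 andbT.
  have := T_min y (P y) (P_AS_range y).
  rewrite /Anorm ler_sqrt; last exact: Re_Aform_ge0.
  by rewrite (Re_Aform_Pythagoras y (TS y)) gerDl.
- have [ip_linl _ _ _] := ip_inner.
  have Aform_PT0 : Aform ip A (P y - T y) (P y - T y) = 0.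
    by rewrite /Aform -opprB (linN A_lin) A_TP0 oppr0 (form0l ip_linl).
  rewrite /Anorm ler_wsqrtr // (Re_Aform_Pythagoras y (TS y)) (Re_Aform_Pythagoras y Ss).
  by rewrite Aform_PT0 addr0 lerDl Re_Aform_ge0.
Qed.

End ASubspaceProjection.

Theorem mainTheorem8 (R : realType) (H : lmodType R[i]) (ip : H -> H -> R[i])
  (hH : separable_complex_Hilbert_space ip)
  (A : H -> H) (hA : positive_op ip A)
  (S : set H) (hS : closed_subspace ip S) (hcomp : compatible ip A S)
  (P : H -> H) (hP : is_P_AS ip A S P) :
  A_projections ip A S =
  [set T | exists W : H -> H, [/\ bounded_op ip W, (forall x, (S `&` kernel A) (W x)) &
                                  T = (fun x => P x + W x)]].
Proof.
have [ip_inner _ _] := hH; have [_ S_lin _] := hS; have [P_bd _ _ _] := hP.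
have proj_iff := A_projection_iff ip_inner hA S_lin hP.
apply/seteqP; split=> T /=.
- case=> T_bd TS T_min; exists (fun x => T x - P x); split.
  + exact: (bounded_opD ip_inner T_bd (bounded_opN ip_inner P_bd)).
  + move=> x; split; first exact: (subspaceB S_lin (TS x) (P_AS_range hP x)).
    exact: (proj_iff T TS).1.
  + by apply/funext => x; rewrite addrC subrK.
- case=> W [W_bd W_ker ->].
  have TS y : S (P y + W y).
    by apply: (subspaceD S_lin (P_AS_range hP y)); case: (W_ker y).
  split=> //; first exact: (bounded_opD ip_inner P_bd W_bd).
  by apply: (proj_iff _ TS).2 => y; rewrite addrC addKr; case: (W_ker y).
Qed.
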